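(* Let $d\ge2$, let $\mathbf A,\mathbf B\in\overline{\mathbb Q}[t]$ be nonzero coprime polynomials, $\mathbf c=\mathbf A/\mathbf B$, let $\lambda\in\overline{\mathbb Q}^*$ and let $|\cdot|_v$ be an absolute value on $\overline{\mathbb Q}$. Then for each $n\ge1$, $$M_{n+1,v}(\lambda)\ge\frac{\min\{|\lambda|_v,1\}}{2\max\{|\lambda|_v,1\}}\cdot M_{n,v}(\lambda)^d.$$
   Context: The polynomials $\mathbf A_{\mathbf c,n},\mathbf B_{\mathbf c,n}$ are defined by: $\mathbf A_{\mathbf c,0}=\mathbf A$, $\mathbf B_{\mathbf c,0}=\mathbf B$; if $\mathbf A(0)\neq0$ then $\mathbf A_{\mathbf c,1}=\mathbf A^d+t\mathbf B^d$, $\mathbf B_{\mathbf c,1}=\mathbf A\mathbf B^{d-1}$, while if $\mathbf A(0)=0$ then $\mathbf A_{\mathbf c,1}=(\mathbf A^d+t\mathbf B^d)/t$, $\mathbf B_{\mathbf c,1}=\mathbf A\mathbf B^{d-1}/t$; for $n\ge1$, $\mathbf A_{\mathbf c,n+1}=\mathbf A_{\mathbf c,n}^d+t\mathbf B_{\mathbf c,n}^d$, $\mathbf B_{\mathbf c,n+1}=\mathbf A_{\mathbf c,n}\mathbf B_{\mathbf c,n}^{d-1}$. Then $M_{n,v}(\lambda)=\max\{|\mathbf A_{\mathbf c,n}(\lambda)|_v,|\mathbf B_{\mathbf c,n}(\lambda)|_v\}$. *)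

From HB Require Import structures.
From mathcomp Require Import all_boot all_order all_algebra all_field.
From mathcomp Require Import reals.
Set Implicit Arguments. Unset Strict Implicit. Unset Printing Implicit Defensive.
Import Order.TTheory GRing.Theory Num.Theory.
Local Open Scope ring_scope.

(* Qbar is modelled by algC (the algebraic closure of Q in mathcomp). *)

Definition is_absval (R : realType) (v : algC -> R) : Prop :=
  [/\ (forall x, 0 <= v x),
      (forall x, v x = 0 <-> x = 0),
      (forall x y, v (x * y) = v x * v y) &
      (forall x y, v (x + y) <= v x + v y)].

Definition ab_step (d : nat) (p : {poly algC} * {poly algC}) :=
  (p.1 ^+ d + 'X * p.2 ^+ d, p.1 * p.2 ^+ (d - 1)).

Definition ab_first (d : nat) (A B : {poly algC}) :=
  if A.[0] != 0 then ab_step d (A, B)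
  else ((ab_step d (A, B)).1 %/ 'X, (ab_step d (A, B)).2 %/ 'X).

Fixpoint cAB (d : nat) (A B : {poly algC}) (n : nat) :=
  match n with
  | 0 => (A, B)
  | 1 => ab_first d A B
  | m.+1 => ab_step d (cAB d A B m)
  end.

Definition Mnv (R : realType) (v : algC -> R) (d : nat) (A B : {poly algC})
  (n : nat) (lam : algC) : R :=
  Num.max (v (cAB d A B n).1.[lam]) (v (cAB d A B n).2.[lam]).

(* Write x = |A_n(lam)|, y = |B_n(lam)| and L = |lam|.  Then
   M_{n+1} >= max (|x^d - L y^d|, x y^(d-1)).  If y is the larger one, either
   x^d >= L y^d / 2 and the second entry is >= x^d, or the first one is
   >= L y^d / 2; if x is the larger one, either L y^d >= x^d / 2 and the second
   entry is >= y^d >= x^d / (2L), or the first one is >= x^d / 2. *)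
From HB Require Import structures.
From mathcomp Require Import all_boot all_order all_algebra all_field.
From mathcomp Require Import reals.
From mathcomp Require Import ring lra.
Import Order.TTheory GRing.Theory Num.Theory.
Local Open Scope ring_scope.

Section AbsoluteValue.

Context {R : realType} {v : algC -> R}.
Hypothesis absv : is_absval v.

Lemma absval_ge0 x : 0 <= v x.
Proof. by case: absv. Qed.

Lemma absval_eq0 x : (v x == 0) = (x == 0).
Proof. by case: absv => _ v0 _ _; apply/eqP/eqP => /v0. Qed.

Lemma absval_gt0 {x} : x != 0 -> 0 < v x.
Proof. by move=> x0; rewrite lt_def absval_eq0 x0 absval_ge0. Qed.

Lemma absvalM x y : v (x * y) = v x * v y.
Proof. by case: absv. Qed.

Lemma absvalD x y : v (x + y) <= v x + v y.
Proof. by case: absv. Qed.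

Lemma absval1 : v 1 = 1.
Proof.
have v1_neq0 : v 1 != 0 by rewrite absval_eq0 oner_eq0.
by apply: (mulfI v1_neq0); rewrite -absvalM !mulr1.
Qed.

Lemma absvalN x : v (- x) = v x.
Proof.
have vN1_sq : v (-1) * v (-1) = 1 by rewrite -absvalM mulrNN mulr1 absval1.
have vN1 : v (-1) = 1 by have := absval_ge0 (-1); nra.
by rewrite -mulN1r absvalM vN1 mul1r.
Qed.

Lemma absvalX x k : v (x ^+ k) = v x ^+ k.
Proof. by elim: k => [|k IH]; rewrite ?absval1 // !exprS absvalM IH. Qed.

Lemma absval_dist x y : `|v x - v y| <= v (x + y).
Proof.
have vxy := absvalD (x + y) (- y); have vyx := absvalD (x + y) (- x).
rewrite addrK absvalN in vxy; rewrite addrC addKr absvalN in vyx.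
rewrite ler_norml; apply/andP; split; lra.
Qed.

End AbsoluteValue.

Lemma ab_step_lower_bound {R : realType} (L c : R) (d : nat) (x y X Y : R) :
  (1 <= d)%N -> 0 <= x -> 0 <= y -> 0 <= c -> 2 * c <= L -> 2 * c * L <= 1 ->
  `|x ^+ d - L * y ^+ d| <= X -> x * y ^+ d.-1 <= Y ->
  c * Num.max x y ^+ d <= Num.max X Y.
Proof.
move=> d_gt0 x0 y0 c0 cL cL1 /ler_normlP[X1 X2] hY.
have xd0 : 0 <= x ^+ d by apply: exprn_ge0.
have yd0 : 0 <= y ^+ d by apply: exprn_ge0.
have expr_pred z : z ^+ d = z * z ^+ d.-1 by rewrite -exprS prednK.
rewrite le_max; case: (leP x y) => [xy|/ltW yx]; rewrite ?(max_r xy) ?(max_l yx).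
- have xY : x ^+ d <= Y.
    by apply: le_trans hY; rewrite expr_pred ler_wpM2l // lerXn2r ?nnegrE.
  by have [] := leP (x ^+ d) (L * y ^+ d / 2) => h; apply/orP; [left|right]; nra.
- have yY : y ^+ d <= Y.
    by apply: le_trans hY; rewrite expr_pred ler_wpM2r ?exprn_ge0.
  by have [] := leP (L * y ^+ d) (x ^+ d / 2) => h; apply/orP; [left|right]; nra.
Qed.

Lemma min_div_max_bounds {R : realType} {L : R}
    (c := Num.min L 1 / (2 * Num.max L 1)) :
  0 < L -> [/\ 0 <= c, 2 * c <= L & 2 * c * L <= 1].
Proof.
move=> L0; rewrite /c; case: (leP L 1) => [L1|/ltW L1].
  by rewrite mulr1; split; nra.
have -> : 2 * (1 / (2 * L)) = L^-1 by field; rewrite gt_eqF.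
have iL0 : 0 < L^-1 by rewrite invr_gt0.
have iL1 : L^-1 <= 1 by rewrite invf_le1.
by rewrite mulVf ?gt_eqF //; split; rewrite ?divr_ge0 ?mulr_ge0 //; lra.
Qed.

Lemma cAB_succ (d : nat) (A B : {poly algC}) (n : nat) :
  (1 <= n)%N -> cAB d A B n.+1 = ab_step d (cAB d A B n).
Proof. by case: n. Qed.

Theorem lemma5p5 (R : realType) (d : nat) (A B : {poly algC}) (lam : algC)
  (v : algC -> R) :
  (2 <= d)%N -> A != 0 -> B != 0 -> coprimep A B -> lam != 0 ->
  is_absval v ->
  forall n : nat, (1 <= n)%N ->
    Mnv v d A B n.+1 lam >=
      Num.min (v lam) 1 / (2 * Num.max (v lam) 1) * Mnv v d A B n lam ^+ d.
Proof.
move=> d_ge2 _ _ _ lam0 absv n n_gt0.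
have [c0 cL cL1] := min_div_max_bounds (absval_gt0 absv lam0).
rewrite /Mnv cAB_succ // /ab_step /= !hornerE.
set a := (cAB d A B n).1.[lam]; set b := (cAB d A B n).2.[lam].
apply: (ab_step_lower_bound (v lam)); rewrite ?(absval_ge0 absv) //.
- exact: leq_trans d_ge2.
- by have := absval_dist absv (a ^+ d) (lam * b ^+ d); rewrite absvalM // !absvalX.
- by rewrite absvalM // absvalX // subn1.
Qed.
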